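(* Let $\mathcal{X},\mathcal{Y},\mathcal{Z}$ be finite alphabets and $(X,Y,Z)\sim P_X(x)P_{Y|X}(y|x)P_{Z|X}(z|x)$. Define $\mathcal{A}_1$ as the set of all tuples $(R_I,R_S,R_J,R_L)$ such that, for some random variable $U$ on a finite alphabet $\mathcal{U}$ with $|\mathcal{U}|\le|\mathcal{Y}|+2$ forming a Markov chain $Z-X-Y-U$, $R_I+R_S\le I(Z;U)$, $R_J\ge I(Y;U)-I(Z;U)+R_I$, $R_L\ge I(X;U)-I(Z;U)+R_I$, $R_I\ge0$, $R_S\ge0$. Define $\mathcal{A}_2$ as the set of all tuples $(R_I,R_S,R_J,R_L)$ such that, for some random variables $U,V$ on finite alphabets $\mathcal{U},\mathcal{V}$ with $|\mathcal{U}|\le(|\mathcal{Y}|+2)(|\mathcal{Y}|+3)$ and $|\mathcal{V}|\le|\mathcal{Y}|+3$ forming a Markov chain $Z-X-Y-U-V$, $0\le R_I\le I(Z;V)$, $0\le R_S\le I(Z;U)-I(Z;V)$, $R_J\ge I(Y;U)-I(Z;U)+I(Z;V)$, $R_L\ge I(X;U)-I(Z;U)+I(Z;V)$. Then $\mathcal{A}_1=\mathcal{A}_2$.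
   Context: $P_X$ is a distribution on the finite set $\mathcal{X}$ and $P_{Y|X}$, $P_{Z|X}$ are channels from $\mathcal{X}$ to finite sets $\mathcal{Y}$, $\mathcal{Z}$. $I$ denotes mutual information (base-2 logarithms). *)

From HB Require Import structures.
From mathcomp Require Import all_boot all_order all_algebra.
From mathcomp Require Import reals exp.
Set Implicit Arguments. Unset Strict Implicit. Unset Printing Implicit Defensive.
Import Order.TTheory GRing.Theory Num.Theory.
Local Open Scope ring_scope.

Section InfoDefs.
Variable R : realType.

Definition log2 (x : R) : R := ln x / ln 2.

Definition is_pmf (T : finType) (p : T -> R) : Prop :=
  (forall t, 0 <= p t) /\ \sum_(t : T) p t = 1.

Definition is_channel (A B : finType) (W : A -> B -> R) : Prop :=
  forall a, is_pmf (W a).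

(* Mutual information I(f;g) (base 2) of the random variables f, g defined on
   a finite sample space T with pmf p; convention 0 log 0 = 0. *)
Definition minfo (T A B : finType) (p : T -> R) (f : T -> A) (g : T -> B) : R :=
  \sum_(a : A) \sum_(b : B)
    let pab := \sum_(t | (f t == a) && (g t == b)) p t in
    let pa := \sum_(t | f t == a) p t in
    let pb := \sum_(t | g t == b) p t in
    if pab == 0 then 0 else pab * log2 (pab / (pa * pb)).

(* Joint law of (X,Y,Z,U) with Z - X - Y - U:
   P_X(x) P_{Y|X}(y|x) P_{Z|X}(z|x) Q(u|y).  Sample point ((x,y,z),u). *)
Definition joint4 (X Y Z U : finType) (PX : X -> R) (PYX : X -> Y -> R)
  (PZX : X -> Z -> R) (Q : Y -> U -> R) : (X * Y * Z * U)%type -> R :=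
  fun t => let: (x, y, z, u) := t in PX x * PYX x y * PZX x z * Q y u.

Definition joint5 (X Y Z U V : finType) (PX : X -> R) (PYX : X -> Y -> R)
  (PZX : X -> Z -> R) (Q : Y -> U -> R) (S : U -> V -> R)
  : (X * Y * Z * U * V)%type -> R :=
  fun t => let: (x, y, z, u, v) := t in
    PX x * PYX x y * PZX x z * Q y u * S u v.

Definition A1 (X Y Z : finType) (PX : X -> R) (PYX : X -> Y -> R)
  (PZX : X -> Z -> R) (RI RS RJ RL : R) : Prop :=
  exists (nU : nat) (Q : Y -> 'I_nU -> R),
    (nU <= #|Y| + 2)%N /\ is_channel Q /\
    let p := joint4 PX PYX PZX Q in
    let IZU := minfo p (fun t => t.1.2) (fun t => t.2) in
    let IYU := minfo p (fun t => t.1.1.2) (fun t => t.2) in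
    let IXU := minfo p (fun t => t.1.1.1) (fun t => t.2) in
    [/\ RI + RS <= IZU, RJ >= IYU - IZU + RI, RL >= IXU - IZU + RI,
        RI >= 0 & RS >= 0].

Definition A2 (X Y Z : finType) (PX : X -> R) (PYX : X -> Y -> R)
  (PZX : X -> Z -> R) (RI RS RJ RL : R) : Prop :=
  exists (nU nV : nat) (Q : Y -> 'I_nU -> R) (S : 'I_nU -> 'I_nV -> R),
    (nU <= (#|Y| + 2) * (#|Y| + 3))%N /\ (nV <= #|Y| + 3)%N /\
    is_channel Q /\ is_channel S /\
    let p := joint5 PX PYX PZX Q S in
    let IZV := minfo p (fun t => t.1.1.2) (fun t => t.2) in
    let IZU := minfo p (fun t => t.1.1.2) (fun t => t.1.2) in
    let IYU := minfo p (fun t => t.1.1.1.2) (fun t => t.1.2) in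
    let IXU := minfo p (fun t => t.1.1.1.1) (fun t => t.1.2) in
    [/\ 0 <= RI <= IZV, 0 <= RS <= IZU - IZV,
        RJ >= IYU - IZU + IZV & RL >= IXU - IZU + IZV].

End InfoDefs.

Set Warnings "-notation-overridden,-ambiguous-paths".
From HB Require Import structures.
From mathcomp Require Import all_boot all_order all_algebra.
From mathcomp Require Import reals exp ring lra.
Import Order.TTheory GRing.Theory Num.Theory.
Local Open Scope ring_scope.
Set Implicit Arguments. Unset Strict Implicit. Unset Printing Implicit Defensive.

(* A1 in A2: pass U through an erasure channel that keeps it with probability
   lam = R_I / I(Z;U) and otherwise outputs a fresh symbol; then
   I(Z;V) = lam I(Z;U) = R_I, and the constraints of A2 are those of A1.
   A2 in A1: since R_I <= I(Z;V), the constraints of A1 hold for the same U,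
   so only the alphabet of U must be shrunk.  Each mutual information I(.;U)
   is a sum of per-output contributions, each homogeneous in its column, so
   reweighting the outputs of Q(u|y) by b(u) >= 0 acts linearly on
   I(X;U), I(Y;U), I(Z;U) and keeps Q a channel iff sum_u Q(u|y) b(u) = 1
   for all y.  A Caratheodory argument for this linear program, with the
   |Y| + 2 equality constraints fixing also I(Z;U) and I(X;U) and with
   I(Y;U) as objective, gives a weighting supported on |Y| + 2 outputs. *)

Section Caratheodory.
Variables (R : realType) (U K : finType) (L : K -> U -> R).

Definition supp (a : U -> R) : {set U} := [set u | a u != 0].

Lemma kernel_vector_on (S : {set U}) : (#|K| < #|S|)%N ->
  exists d : U -> R, [/\ forall k, \sum_u L k u * d u = 0,
    forall u, u \notin S -> d u = 0 & exists u, d u != 0].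
Proof.
move=> ltKS; have [u0 u0S] : exists u0, u0 \in S.
  by apply/set0Pn; rewrite -card_gt0 (leq_ltn_trans _ ltKS).
pose M : 'M[R]_(#|S|, #|K|) := \matrix_(i, k) L (enum_val k) (enum_val i).
have : kermx M != 0.
  rewrite -mxrank_eq0 mxrank_ker subn_eq0 -ltnNge.
  exact: leq_ltn_trans (rank_leq_col M) ltKS.
case/rowV0Pn => v /sub_kermxP vM0 /rV0Pn [i0 vi0].
pose d u := if u \in S then v 0 (enum_rank_in u0S u) else 0.
exists d; split.
- move=> k; have := congr1 (fun A : 'rV_#|K| => A 0 (enum_rank k)) vM0.
  rewrite !mxE => vMk0; rewrite -[RHS]vMk0.
  have -> : \sum_u L k u * d u = \sum_(u in S) L k u * v 0 (enum_rank_in u0S u).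
    rewrite [RHS]big_mkcond; apply: eq_bigr => u _.
    by rewrite /d; case: ifP; rewrite ?mulr0.
  rewrite big_enum_val /=; apply: eq_bigr => i _.
  by rewrite mxE enum_rankK enum_valK_in mulrC.
- by move=> u /negbTE uS; rewrite /d uS.
- by exists (enum_val i0); rewrite /d enum_valP enum_valK_in.
Qed.

Lemma exists_neg_of_orthogonal (w e : U -> R) :
  (forall u, e u != 0 -> 0 < w u) -> \sum_u w u * e u = 0 ->
  (exists u, e u != 0) -> exists u, e u < 0.
Proof.
move=> we we0 [u0 eu0]; have [u eu|/= nneg] := pickP (fun u => e u < 0).
  by exists u.
have ge0 u : 0 <= w u * e u.
  have [->|eu] := eqVneq (e u) 0; first by rewrite mulr0.
  by rewrite mulr_ge0 ?(ltW (we _ eu)) // leNgt nneg.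
have := @psumr_eq0P _ _ predT _ (fun u _ => ge0 u) we0 u0 isT.
by move/eqP; rewrite mulf_eq0 (negbTE eu0) orbF gt_eqF ?we.
Qed.

Variables (g w : U -> R).
(* Kernel directions of [L] are then orthogonal to [w], which is positive on
   the support: they have a negative entry, so the line search is bounded. *)
Hypothesis w_in_row_span :
  forall d, (forall k, \sum_u L k u * d u = 0) -> \sum_u w u * d u = 0.

Definition improves (a a' : U -> R) := [/\ forall u, 0 <= a' u,
  forall u, a u = 0 -> a' u = 0,
  forall k, \sum_u L k u * a' u = \sum_u L k u * a u &
  \sum_u g u * a' u <= \sum_u g u * a u].

Lemma improves_refl (a : U -> R) : (forall u, 0 <= a u) -> improves a a.
Proof. by split. Qed.

Lemma improves_trans a a' a'' :
  improves a a' -> improves a' a'' -> improves a a''.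
Proof.
case=> _ supp' L' g' [ge0'' supp'' L'' g'']; split=> //.
- by move=> u /supp' /supp''.
- by move=> k; rewrite L'' L'.
- exact: le_trans g'' g'.
Qed.

Lemma descent_direction (a : U -> R) : (forall u, a u != 0 -> 0 < w u) ->
  (#|K| < #|supp a|)%N ->
  exists e : U -> R, [/\ forall k, \sum_u L k u * e u = 0,
    forall u, a u = 0 -> e u = 0, \sum_u g u * e u <= 0 & exists u, e u < 0].
Proof.
move=> aw /kernel_vector_on [d []].
wlog dg : d / \sum_u g u * d u <= 0 => [hwlog dL dS dnz|dL dS dnz].
  have [dg|gd] := lerP (\sum_u g u * d u) 0; first exact: hwlog dg dL dS dnz.
  apply: (hwlog (fun u => - d u)).
  - by under eq_bigr do rewrite mulrN; rewrite sumrN oppr_le0 ltW.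
  - by move=> k; under eq_bigr do rewrite mulrN; rewrite sumrN dL oppr0.
  - by move=> v /dS ->; rewrite oppr0.
  - by case: dnz => u du; exists u; rewrite oppr_eq0.
have da u : a u = 0 -> d u = 0 by move=> au; rewrite dS // inE au eqxx.
exists d; split=> //; apply: exists_neg_of_orthogonal (w_in_row_span dL) dnz.
by move=> u du; apply: aw; apply: contra du => /eqP /da ->.
Qed.

Lemma caratheodory_step (a : U -> R) : (forall u, 0 <= a u) ->
  (forall u, a u != 0 -> 0 < w u) -> (#|K| < #|supp a|)%N ->
  exists a', improves a a' /\ (#|supp a'| < #|supp a|)%N.
Proof.
move=> a0 aw /(descent_direction aw) [e [eL ea eg [u1 eu1]]].
have [um eum um_min] :=
  @arg_minP _ _ _ u1 (fun u => e u < 0) (fun u => a u / - e u) eu1.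
set t := a um / - e um in um_min.
have t0 : 0 <= t by rewrite divr_ge0 // oppr_ge0 ltW.
have a'um : a um + t * e um = 0.
  by rewrite /t invrN mulrN mulNr divfK ?subrr ?lt_eqF.
have um_supp : um \in supp a.
  by rewrite inE; apply: contraTneq eum => /ea ->; rewrite ltxx.
have lin (c : U -> R) : \sum_u c u * (a u + t * e u) =
    \sum_u c u * a u + t * \sum_u c u * e u.
  by rewrite mulr_sumr -big_split; apply: eq_bigr => u _; rewrite mulrDr mulrCA.
exists (fun u => a u + t * e u); split; first split.
- move=> u; have [eu|eu] := ltP (e u) 0; last first.
    by apply: addr_ge0; [exact: a0 | exact: mulr_ge0].
  by have := um_min u eu; rewrite ler_pdivlMr ?oppr_gt0 // -/t; nra.
- by move=> u au; rewrite au (ea _ au) mulr0 addr0.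
- by move=> k; rewrite lin eL mulr0 addr0.
- by rewrite lin gerDl mulr_ge0_le0.
rewrite [X in (_ < X)%N](cardsD1 um) um_supp add1n ltnS.
apply/subset_leq_card/subsetP => u; rewrite !inE => nz; apply/andP; split.
  by apply: contraNneq nz => ->; rewrite a'um.
by apply: contraNneq nz => au; rewrite au (ea _ au) mulr0 addr0.
Qed.

Lemma caratheodory (a : U -> R) : (forall u, 0 <= a u) ->
  (forall u, a u != 0 -> 0 < w u) ->
  exists a', improves a a' /\ (#|supp a'| <= #|K|)%N.
Proof.
have [n] := ubnP #|supp a|; elim: n a => // n IHn a lt_an a0 aw.
have [le_aK|lt_Ka] := leqP #|supp a| #|K|.
  by exists a; split; [apply: improves_refl|].
have [a' [imp' lt_a'a]] := caratheodory_step a0 aw lt_Ka.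
have [a'0 a'a _ _] := imp'.
have a'w u : a' u != 0 -> 0 < w u.
  by move=> nz; apply: aw; apply: contra nz => /eqP /a'a ->.
have [a'' [imp'' le_a''K]] := IHn a' (leq_trans lt_a'a lt_an) a'0 a'w.
by exists a''; split=> //; apply: improves_trans imp' imp''.
Qed.

End Caratheodory.

Section MatrixInformation.
Variable R : realType.
Implicit Types (A B : finType).

Definition mi_term (x r s : R) := if x == 0 then 0 else x * log2 (x / (r * s)).

Definition minfo_col A B (J : A -> B -> R) (b : B) :=
  \sum_a mi_term (J a b) (\sum_b' J a b') (\sum_a' J a' b).

Definition minfo_mx A B (J : A -> B -> R) := \sum_b minfo_col J b.

Lemma minfoE (T A B : finType) (p : T -> R) (f : T -> A) (g : T -> B) :
  minfo p f g = minfo_mx (fun a b => \sum_(t | (f t == a) && (g t == b)) p t).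
Proof.
rewrite /minfo /minfo_mx /minfo_col exchange_big; apply: eq_bigr => b _.
apply: eq_bigr => a _ /=.
have rowE : \sum_(t | f t == a) p t =
    \sum_b' \sum_(t | (f t == a) && (g t == b')) p t.
  exact: partition_big.
have colE : \sum_(t | g t == b) p t =
    \sum_a' \sum_(t | (f t == a') && (g t == b)) p t.
  rewrite (partition_big f predT) //; apply: eq_bigr => a' _.
  by apply: eq_bigl => t; rewrite andbC.
by rewrite rowE colE.
Qed.

Lemma eq_minfo_mx A B (J J' : A -> B -> R) : J =2 J' -> minfo_mx J = minfo_mx J'.
Proof.
move=> eqJ; apply: eq_bigr => b _; apply: eq_bigr => a _.
rewrite eqJ (eq_bigr _ (fun b' _ => eqJ a b')).
by rewrite (eq_bigr _ (fun a' _ => eqJ a' b)).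
Qed.

Lemma mi_term_scale (beta x r s : R) :
  mi_term (beta * x) r (beta * s) = beta * mi_term x r s.
Proof.
rewrite /mi_term; have [->|beta0] := eqVneq beta 0; first by rewrite !mul0r eqxx.
rewrite mulf_eq0 (negbTE beta0) /=; case: eqP => _; first by rewrite mulr0.
have -> : beta * x / (r * (beta * s)) = x / (r * s).
  by rewrite mulrCA invfM mulrACA mulfV // mul1r.
by rewrite mulrA.
Qed.

Lemma minfo_col_scale A B B' (J : A -> B -> R) (J' : A -> B' -> R) b b' beta :
  (forall a, \sum_c J' a c = \sum_c J a c) ->
  (forall a, J' a b' = beta * J a b) ->
  minfo_col J' b' = beta * minfo_col J b.
Proof.
move=> rowJ' colJ'; rewrite /minfo_col mulr_sumr; apply: eq_bigr => a _.
rewrite rowJ' colJ' (eq_bigr _ (fun a' _ => colJ' a')).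
by rewrite -mulr_sumr mi_term_scale.
Qed.

Lemma minfo_col0 A B (J : A -> B -> R) b :
  (forall a, J a b = 0) -> minfo_col J b = 0.
Proof. by move=> Jb0; apply: big1 => a _; rewrite /mi_term Jb0 eqxx. Qed.

Lemma minfo_col_indep A B (J : A -> B -> R) b gamma :
  \sum_a \sum_c J a c = 1 -> (forall a, J a b = gamma * \sum_c J a c) ->
  minfo_col J b = 0.
Proof.
move=> J1 colJ; apply: big1 => a _.
rewrite (eq_bigr _ (fun a' _ => colJ a')) -mulr_sumr J1 mulr1 colJ /mi_term.
have [//|] := eqVneq; rewrite mulf_eq0 negb_or => /andP [gamma0 row0].
by rewrite [_ * gamma]mulrC divff ?mulf_neq0 // /log2 ln1 mul0r mulr0.
Qed.

Definition erasure n (lam : R) (u : 'I_n) (v : 'I_n.+1) : R :=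
  if v == ord_max then 1 - lam
  else if v == widen_ord (leqnSn n) u then lam else 0.

Lemma erasure_widen n lam (u i : 'I_n) :
  erasure lam u (widen_ord (leqnSn n) i) = if u == i then lam else 0.
Proof.
by rewrite /erasure -!val_eqE /= ltn_eqF // eq_sym.
Qed.

Lemma erasure_sum n lam (u : 'I_n) : \sum_v erasure lam u v = 1.
Proof.
rewrite big_ord_recr /= (eq_bigr _ (fun i _ => erasure_widen lam u i)).
rewrite -big_mkcond (big_pred1 u) => [|i]; last exact: eq_sym.
by rewrite /erasure eqxx addrC subrK.
Qed.

Lemma erasure_channel n lam : 0 <= lam <= 1 -> is_channel (@erasure n lam).
Proof.
move=> /andP [lam0 lam1] u; split; last exact: erasure_sum.
by move=> v; rewrite /erasure; case: ifP; rewrite ?subr_ge0 //; case: ifP.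
Qed.

Lemma minfo_mx_erasure A n lam (J : A -> 'I_n -> R) :
  \sum_a \sum_u J a u = 1 ->
  minfo_mx (fun a v => \sum_u J a u * erasure lam u v) = lam * minfo_mx J.
Proof.
move=> J1; set J' := fun a v => _.
have rowJ' a : \sum_v J' a v = \sum_u J a u.
  rewrite exchange_big /=; apply: eq_bigr => u _.
  by rewrite -mulr_sumr erasure_sum mulr1.
rewrite /minfo_mx big_ord_recr /= (@minfo_col_indep _ _ J' _ (1 - lam)).
  rewrite addr0 mulr_sumr; apply: eq_bigr => i _.
  apply: minfo_col_scale => // a; rewrite /J'.
  under eq_bigr do rewrite erasure_widen fun_if mulr0.
  by rewrite -big_mkcond big_pred1_eq mulrC.
- by under eq_bigr do rewrite rowJ'.
- move=> a; rewrite rowJ' mulr_sumr; apply: eq_bigr => u _.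
  by rewrite /erasure eqxx mulrC.
Qed.

End MatrixInformation.

Lemma exists_ratio (R : realFieldType) (r s : R) :
  0 <= r <= s -> exists2 lam : R, 0 <= lam <= 1 & lam * s = r.
Proof.
case/andP=> r0 rs; have [s0|s0] := eqVneq s 0.
  by exists 0; rewrite ?lexx ?ler01 // mul0r; apply/eqP; rewrite eq_le r0 -s0 rs.
have s_gt0 : 0 < s by rewrite lt_def s0 (le_trans r0 rs).
exists (r / s); last by rewrite divfK.
by rewrite divr_ge0 ?(ltW s_gt0) //= ler_pdivrMr // mul1r.
Qed.

Section Marginals.
Variable R : realType.

Lemma sum_pair (T V : finType) (G : T * V -> R) :
  \sum_p G p = \sum_t \sum_v G (t, v).
Proof. by rewrite pair_bigA; apply: eq_bigr => -[]. Qed.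

Lemma sum_pair_snd (T V : finType) (F : T -> V -> R) (P : pred T) v :
  \sum_(t : T * V | P t.1 && (t.2 == v)) F t.1 t.2 = \sum_(t | P t) F t v.
Proof.
rewrite -(pair_big_dep P (fun _ w => w == v)).
by apply: eq_bigr => t _; rewrite big_pred1_eq.
Qed.

Lemma sum_channel_out (T U V : finType) (p : T -> R) (h : T -> U)
  (S : U -> V -> R) (P : pred T) : is_channel S ->
  \sum_(t : T * V | P t.1) p t.1 * S (h t.1) t.2 = \sum_(t | P t) p t.
Proof.
move=> HS; rewrite (eq_bigl (fun t => P t.1 && predT t.2)) => [|t]; last first.
  by rewrite andbT.
rewrite -(pair_big P predT (fun t v => p t * S (h t) v)).
by apply: eq_bigr => t _; rewrite -mulr_sumr (HS _).2 mulr1.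
Qed.

End Marginals.

Section JointLaw.
Variables (R : realType) (X Y Z : finType).
Variables (PX : X -> R) (PYX : X -> Y -> R) (PZX : X -> Z -> R).
Hypotheses (PX_pmf : is_pmf PX) (PYX_channel : is_channel PYX)
  (PZX_channel : is_channel PZX).
Implicit Types (A U V : finType).

Definition pXYZ (t : X * Y * Z) : R :=
  let: (x, y, z) := t in PX x * PYX x y * PZX x z.

Definition joint_law A U (f : X * Y * Z -> A) (Q : Y -> U -> R) a u :=
  \sum_(t | f t == a) pXYZ t * Q t.1.2 u.

Lemma joint4E U (Q : Y -> U -> R) t u :
  joint4 PX PYX PZX Q (t, u) = pXYZ t * Q t.1.2 u.
Proof. by case: t => [[x y] z]. Qed.

Lemma joint5E U V (Q : Y -> U -> R) (S : U -> V -> R) t v :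
  joint5 PX PYX PZX Q S (t, v) = joint4 PX PYX PZX Q t * S t.2 v.
Proof. by case: t => [[[x y] z] u]. Qed.

Lemma joint_lawE A U (f : X * Y * Z -> A) (Q : Y -> U -> R) a u :
  \sum_(t | (f t.1 == a) && (t.2 == u)) joint4 PX PYX PZX Q t = joint_law f Q a u.
Proof.
rewrite /joint_law.
have /= <- := sum_pair_snd (fun t u => pXYZ t * Q t.1.2 u) (fun t => f t == a) u.
by apply: eq_bigr => -[t u'] _; rewrite joint4E.
Qed.

Lemma minfo_joint4 A U (f : X * Y * Z -> A) (Q : Y -> U -> R) :
  minfo (joint4 PX PYX PZX Q) (fun t => f t.1) (fun t => t.2) =
  minfo_mx (joint_law f Q).
Proof. by rewrite minfoE; apply: eq_minfo_mx => a u; rewrite joint_lawE. Qed.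

Lemma minfo_joint5_U A U V (f : X * Y * Z -> A) (Q : Y -> U -> R)
  (S : U -> V -> R) : is_channel S ->
  minfo (joint5 PX PYX PZX Q S) (fun t => f t.1.1) (fun t => t.1.2) =
  minfo_mx (joint_law f Q).
Proof.
move=> HS; rewrite minfoE; apply: eq_minfo_mx => a u; rewrite -joint_lawE.
rewrite -(sum_channel_out _ (fun t => t.2)
  (fun t => (f t.1 == a) && (t.2 == u)) HS).
by apply: eq_bigr => -[t v] _; rewrite joint5E.
Qed.

Lemma minfo_joint5_V A U V (f : X * Y * Z -> A) (Q : Y -> U -> R)
  (S : U -> V -> R) :
  minfo (joint5 PX PYX PZX Q S) (fun t => f t.1.1) (fun t => t.2) =
  minfo_mx (fun a v => \sum_u joint_law f Q a u * S u v).
Proof.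
rewrite minfoE; apply: eq_minfo_mx => a v.
transitivity (\sum_(t | f t.1 == a) joint4 PX PYX PZX Q t * S t.2 v).
  have /= <- := sum_pair_snd (fun t v => joint4 PX PYX PZX Q t * S t.2 v)
    (fun t => f t.1 == a) v.
  by apply: eq_bigr => -[t w] _; rewrite joint5E.
rewrite (partition_big (fun t => t.2) predT) //=; apply: eq_bigr => u _.
by rewrite -joint_lawE mulr_suml; apply: eq_bigr => t /andP [_ /eqP ->].
Qed.

Lemma sum_pXYZ : \sum_t pXYZ t = 1.
Proof.
rewrite !sum_pair -(proj2 PX_pmf); apply: eq_bigr => x _.
rewrite -[RHS]mulr1 -(proj2 (PYX_channel x)) mulr_sumr; apply: eq_bigr => y _.
by rewrite -mulr_sumr (proj2 (PZX_channel x)) mulr1.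
Qed.

Lemma joint_law_row A U (f : X * Y * Z -> A) (Q : Y -> U -> R) a :
  is_channel Q -> \sum_u joint_law f Q a u = \sum_(t | f t == a) pXYZ t.
Proof.
move=> HQ; rewrite exchange_big /=; apply: eq_bigr => t _.
by rewrite -mulr_sumr (proj2 (HQ _)) mulr1.
Qed.

Lemma joint_law_total A U (f : X * Y * Z -> A) (Q : Y -> U -> R) :
  is_channel Q -> \sum_a \sum_u joint_law f Q a u = 1.
Proof.
move=> HQ; under eq_bigr do rewrite joint_law_row //.
by rewrite -sum_pXYZ [RHS](partition_big f predT).
Qed.

Lemma minfo_mx_weighted A U (f : X * Y * Z -> A) (Q : Y -> U -> R) (b : U -> R) :
  is_channel Q -> (forall u, \sum_y Q y u != 0 -> b u = 1) ->
  minfo_mx (joint_law f Q) = \sum_u minfo_col (joint_law f Q) u * b u.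
Proof.
move=> HQ b1; apply: eq_bigr => u _.
have [Qu0|/b1 ->] := eqVneq (\sum_y Q y u) 0; last by rewrite mulr1.
rewrite minfo_col0 ?mul0r // => a; apply: big1 => t _.
by rewrite (psumr_eq0P (fun y _ => (HQ y).1 u) Qu0) ?mulr0.
Qed.

Definition reweight U (Q : Y -> U -> R) (b : U -> R) y (i : 'I_#|supp b|) : R :=
  b (enum_val i) * Q y (enum_val i).
Arguments reweight {U} Q b y i.

Lemma sum_supp U (b F : U -> R) : (forall u, b u = 0 -> F u = 0) ->
  \sum_(i < #|supp b|) F (enum_val i) = \sum_u F u.
Proof.
move=> bF; rewrite -big_enum_val big_mkcond; apply: eq_bigr => u _.
by case: ifP => //; rewrite inE => /negbFE/eqP/bF ->.
Qed.

Lemma reweight_channel U (Q : Y -> U -> R) (b : U -> R) :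
  is_channel Q -> (forall u, 0 <= b u) -> (forall y, \sum_u Q y u * b u = 1) ->
  is_channel (reweight Q b).
Proof.
move=> HQ b0 Qb1 y; split=> [i|]; first by rewrite mulr_ge0 ?b0 ?(HQ y).1.
rewrite /reweight (sum_supp (F := fun u => b u * Q y u)) => [|u ->].
  by rewrite -(Qb1 y); apply: eq_bigr => u _; rewrite mulrC.
by rewrite mul0r.
Qed.

Lemma minfo_reweight A U (f : X * Y * Z -> A) (Q : Y -> U -> R) (b : U -> R) :
  is_channel Q -> (forall u, 0 <= b u) -> (forall y, \sum_u Q y u * b u = 1) ->
  minfo_mx (joint_law f (reweight Q b)) =
  \sum_u minfo_col (joint_law f Q) u * b u.
Proof.
move=> HQ b0 Qb1; have HQb := reweight_channel HQ b0 Qb1.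
pose F u := minfo_col (joint_law f Q) u * b u.
rewrite -(sum_supp (b := b) (F := F)) => [|u bu0]; last by rewrite /F bu0 mulr0.
apply: eq_bigr => i _; rewrite /F mulrC; apply: minfo_col_scale => a.
  by rewrite !joint_law_row.
by rewrite /joint_law mulr_sumr; apply: eq_bigr => t _; rewrite mulrCA.
Qed.

Notation IX Q := (minfo_mx (joint_law (fun t => t.1.1) Q)).
Notation IY Q := (minfo_mx (joint_law (fun t => t.1.2) Q)).
Notation IZ Q := (minfo_mx (joint_law (fun t => t.2) Q)).

Lemma cardinality_reduction U (Q : Y -> U -> R) : is_channel Q ->
  exists m (Q' : Y -> 'I_m -> R), [/\ (m <= #|Y| + 2)%N, is_channel Q',
    IZ Q' = IZ Q, IX Q' = IX Q & IY Q' <= IY Q].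
Proof.
move=> HQ.
pose colI A (f : X * Y * Z -> A) := minfo_col (joint_law f Q).
pose L (k : option (option Y)) u := match k with
  | Some (Some y) => Q y u
  | Some None => colI _ (fun t => t.2) u
  | None => colI _ (fun t => t.1.1) u end.
have span d : (forall k, \sum_u L k u * d u = 0) ->
    \sum_u (\sum_y Q y u) * d u = 0.
  move=> Ld; under eq_bigr do rewrite mulr_suml.
  by rewrite exchange_big big1 // => y _; apply: (Ld (Some (Some y))).
pose live u : R := if \sum_y Q y u == 0 then 0 else 1.
have live0 u : 0 <= live u by rewrite /live; case: ifP.
have live1 u : \sum_y Q y u != 0 -> live u = 1 by rewrite /live => /negbTE ->.
have livew u : live u != 0 -> 0 < \sum_y Q y u.
  rewrite /live; have [_|nz _] := eqVneq (\sum_y Q y u) 0; first by rewrite eqxx.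
  by rewrite lt_def nz sumr_ge0 // => y _; apply: (HQ y).1.
have [b [[b0 _ bL bg] card_b]] :=
  caratheodory (colI _ (fun t => t.1.2)) span live0 livew.
have Qb1 y : \sum_u Q y u * b u = 1.
  rewrite (bL (Some (Some y))) -(proj2 (HQ y)); apply: eq_bigr => u _.
  have [Qu0|/live1 ->] := eqVneq (\sum_y' Q y' u) 0; last by rewrite mulr1.
  by rewrite /= (psumr_eq0P (fun y' _ => (HQ y').1 u) Qu0) ?mul0r.
exists #|supp b|, (reweight Q b); split.
- by rewrite addn2; rewrite !card_option in card_b.
- exact: reweight_channel.
- by rewrite minfo_reweight // (minfo_mx_weighted _ HQ live1) (bL (Some None)).
- by rewrite minfo_reweight // (minfo_mx_weighted _ HQ live1) (bL None).
- by rewrite minfo_reweight // (minfo_mx_weighted _ HQ live1).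
Qed.

Lemma A1_sub_A2 RI RS RJ RL :
  A1 PX PYX PZX RI RS RJ RL -> A2 PX PYX PZX RI RS RJ RL.
Proof.
case=> nU [Q [leU [HQ]]] /=.
rewrite (minfo_joint4 (fun t => t.2)) (minfo_joint4 (fun t => t.1.2)).
rewrite (minfo_joint4 (fun t => t.1.1)) => -[RIS RJ_ge RL_ge RI0 RS0].
have [lam lam01 lamIZ] : exists2 lam : R, 0 <= lam <= 1 & lam * IZ Q = RI.
  by apply: exists_ratio; rewrite RI0 /=; lra.
have HS := @erasure_channel _ nU _ lam01.
exists nU, nU.+1, Q, (erasure lam).
split; first by apply: leq_trans leU (leq_pmulr _ _); rewrite addn3.
split; first by rewrite addnS ltnS.
do 2!split=> //=.
rewrite (minfo_joint5_V (fun t => t.2)) minfo_mx_erasure ?joint_law_total //.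
rewrite (minfo_joint5_U (fun t => t.2)) // (minfo_joint5_U (fun t => t.1.2)) //.
rewrite (minfo_joint5_U (fun t => t.1.1)) // lamIZ.
by split; rewrite ?RI0 ?RS0 ?lexx //=; lra.
Qed.

Lemma A2_sub_A1 RI RS RJ RL :
  A2 PX PYX PZX RI RS RJ RL -> A1 PX PYX PZX RI RS RJ RL.
Proof.
case=> nU [nV [Q [S [_ [_ [HQ [HS]]]]]]] /=.
rewrite (minfo_joint5_U (fun t => t.2)) // (minfo_joint5_U (fun t => t.1.2)) //.
rewrite (minfo_joint5_U (fun t => t.1.1)) //.
case=> /andP [RI0 RI_le] /andP [RS0 RS_le] RJ_ge RL_ge.
have [m [Q' [le_m HQ' eqZ eqX leY]]] := cardinality_reduction HQ.
exists m, Q'; split=> //; split=> //=.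
rewrite (minfo_joint4 (fun t => t.2)) (minfo_joint4 (fun t => t.1.2)).
by rewrite (minfo_joint4 (fun t => t.1.1)) eqZ eqX; split=> //; lra.
Qed.

End JointLaw.

Theorem mainTheorem2 (R : realType) (X Y Z : finType)
  (PX : X -> R) (PYX : X -> Y -> R) (PZX : X -> Z -> R) :
  is_pmf PX -> is_channel PYX -> is_channel PZX ->
  forall RI RS RJ RL : R,
    A1 PX PYX PZX RI RS RJ RL <-> A2 PX PYX PZX RI RS RJ RL.
Proof.
move=> PX_pmf PYX_channel PZX_channel RI RS RJ RL.
by split; [apply: A1_sub_A2 | apply: A2_sub_A1].
Qed.
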